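(* Let \(\mathcal{F}\) be a set of increasing and amenable functions \(f\colon[0,\infty)\to[0,\infty)\). (a) If \(\mathcal{F}\) is \(2\)-separating, then for every metric space \((X,d)\) the following are equivalent: (i) \(f\circ d\) is a metric on \(X\) for every \(f\in\mathcal{F}\); (ii) \(d\) is an ultrametric on \(X\). (b) If \(\mathcal{F}\) is not \(2\)-separating, then there is a metric space \((X,d)\) such that \(f\circ d\) is a metric on \(X\) for every \(f\in\mathcal{F}\), but \(d\) is not an ultrametric on \(X\).
   Context: A function \(f\colon[0,\infty)\to[0,\infty)\) is amenable if \(f^{-1}(\{0\})=\{0\}\), and increasing if \(a\ge b\) implies \(f(a)\ge f(b)\). For \(k\in(1,\infty)\), a set \(\mathcal{F}\) of increasing amenable functions \([0,\infty)\to[0,\infty)\) is \(k\)-separating if for all \(t_1,t_2\in[0,\infty)\) with \(t_1<t_2\) there is \(f\in\mathcal{F}\) with \(k f(t_1)<f(t_2)\). A metric \(d\) is an ultrametric if \(d(x,y)\le\max\{d(x,z),d(z,y)\}\) for all \(x,y,z\). *)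

From Stdlib Require Export Reals.
Open Scope R_scope.

(* Functions [0,oo) -> [0,oo) are represented as R -> R; only their values on
   [0,oo) matter in every definition below. *)
Definition maps_nonneg (f : R -> R) : Prop := forall t, 0 <= t -> 0 <= f t.

Definition amenable (f : R -> R) : Prop :=
  maps_nonneg f /\ (forall t, 0 <= t -> (f t = 0 <-> t = 0)).

Definition increasing_nonneg (f : R -> R) : Prop :=
  forall a b, 0 <= b -> b <= a -> f b <= f a.

Definition separating (k : R) (F : (R -> R) -> Prop) : Prop :=
  forall t1 t2, 0 <= t1 -> t1 < t2 -> exists f, F f /\ k * f t1 < f t2.

Definition is_metric {X : Type} (d : X -> X -> R) : Prop :=
  (forall x y, 0 <= d x y) /\
  (forall x y, d x y = 0 <-> x = y) /\
  (forall x y, d x y = d y x) /\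
  (forall x y z, d x y <= d x z + d z y).

Definition is_ultrametric {X : Type} (d : X -> X -> R) : Prop :=
  is_metric d /\ (forall x y z, d x y <= Rmax (d x z) (d z y)).

(* If d is an ultrametric, then f (d x y) <= f (max (d x z) (d z y)), which is at
   most f (d x z) + f (d z y), so every increasing amenable f turns d into a metric.
   Conversely, if d x y > m := max (d x z) (d z y), a 2-separating family provides
   f with 2 f m < f (d x y) <= f (d x z) + f (d z y) <= 2 f m, contradicting the
   triangle inequality for f o d.  If the family is not 2-separating, there are
   0 < a < b <= 2a with f b <= 2 f a for all f in it; the isosceles triangle with
   legs a and base b is then a metric space on which every f o d is a metric, yet
   it is not ultrametric since b > max a a. *)

From Stdlib Require Import Reals Lra Classical.
Open Scope R_scope.

Lemma amenable_zero (f : R -> R) : amenable f -> f 0 = 0.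
Proof. intros [_ Hz]; apply (Hz 0); lra. Qed.

Lemma amenable_pos (f : R -> R) (t : R) : amenable f -> 0 < t -> 0 < f t.
Proof.
  intros [Hn Hz] Ht.
  destruct (Rle_lt_or_eq_dec _ _ (Hn t (Rlt_le _ _ Ht))) as [Hlt | Heq]; auto.
  symmetry in Heq; apply (Hz t (Rlt_le _ _ Ht)) in Heq; lra.
Qed.

Lemma is_metric_ext {X : Type} (d d' : X -> X -> R) :
  (forall x y, d x y = d' x y) -> is_metric d -> is_metric d'.
Proof.
  intros E [H0 [Hz [Hs Ht]]]; split; [|split; [|split]]; intros *; rewrite <- ?E; auto.
Qed.

Lemma nonneg_Rmax_le_add (f : R -> R) (u v : R) :
  maps_nonneg f -> 0 <= u -> 0 <= v -> f (Rmax u v) <= f u + f v.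
Proof.
  intros Hn Hu Hv; pose proof (Hn u Hu); pose proof (Hn v Hv).
  unfold Rmax; destruct (Rle_dec u v); lra.
Qed.

Lemma comp_metric_of_ultrametric {X : Type} (f : R -> R) (d : X -> X -> R) :
  increasing_nonneg f -> amenable f -> is_ultrametric d ->
  is_metric (fun x y => f (d x y)).
Proof.
  intros Hi [Hn Hz] [[Hd0 [Hdz [Hds _]]] Hu].
  split; [|split; [|split]].
  - intros x y; apply Hn, Hd0.
  - intros x y; rewrite <- Hdz; apply Hz, Hd0.
  - intros x y; rewrite Hds; reflexivity.
  - intros x y z; apply Rle_trans with (f (Rmax (d x z) (d z y))).
    + apply Hi; [apply Hd0 | apply Hu].
    + apply nonneg_Rmax_le_add; auto.
Qed.

Lemma ultrametric_of_comp_metric {X : Type} (k : R) (F : (R -> R) -> Prop)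
    (d : X -> X -> R) :
  2 <= k -> (forall f, F f -> increasing_nonneg f /\ maps_nonneg f) ->
  separating k F -> is_metric d -> (forall f, F f -> is_metric (fun x y => f (d x y))) ->
  is_ultrametric d.
Proof.
  intros Hk HF Hsep Hd Hall; split; [exact Hd|].
  destruct Hd as [Hd0 _]; intros x y z.
  set (m := Rmax (d x z) (d z y)).
  destruct (Rle_lt_dec (d x y) m) as [Hle | Hgt]; [exact Hle | exfalso].
  assert (Hm : 0 <= m) by (apply Rle_trans with (d x z); [apply Hd0 | apply Rmax_l]).
  destruct (Hsep m (d x y) Hm Hgt) as [f [Hf Hsepf]].
  destruct (HF f Hf) as [Hi Hn].
  destruct (Hall f Hf) as [_ [_ [_ Ht]]]; specialize (Ht x y z); simpl in Ht.
  assert (f (d x z) <= f m) by (apply Hi; [apply Hd0 | apply Rmax_l]).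
  assert (f (d z y) <= f m) by (apply Hi; [apply Hd0 | apply Rmax_r]).
  pose proof (Hn m Hm); nra.
Qed.

Inductive vertex : Type := Apex | Left | Right.

Definition isosceles (a b : R) (x y : vertex) : R :=
  match x, y with
  | Apex, Apex | Left, Left | Right, Right => 0
  | Left, Right | Right, Left => b
  | _, _ => a
  end.

Lemma isosceles_metric (a b : R) :
  0 < a -> 0 < b -> b <= 2 * a -> is_metric (isosceles a b).
Proof.
  intros Ha Hb Hba; split; [|split; [|split]].
  - intros [] []; simpl; lra.
  - intros [] []; simpl; split; intro H; (lra || discriminate || reflexivity).
  - intros [] []; reflexivity.
  - intros [] [] []; simpl; lra.
Qed.

Lemma isosceles_not_ultrametric (a b : R) : a < b -> ~ is_ultrametric (isosceles a b).
Proof.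
  intros Hab [_ Hu]; specialize (Hu Left Right Apex); simpl in Hu.
  rewrite Rmax_left in Hu; lra.
Qed.

Lemma isosceles_comp_metric (f : R -> R) (a b : R) :
  amenable f -> 0 < a -> 0 < b -> f b <= 2 * f a ->
  is_metric (fun x y => f (isosceles a b x y)).
Proof.
  intros Hf Ha Hb Hfab.
  apply is_metric_ext with (isosceles (f a) (f b)).
  - intros [] []; simpl; rewrite ?(amenable_zero f Hf); reflexivity.
  - apply isosceles_metric; auto using amenable_pos.
Qed.

Lemma not_separating_witness (k : R) (F : (R -> R) -> Prop) :
  ~ separating k F ->
  exists t1 t2, 0 <= t1 /\ t1 < t2 /\ forall f, F f -> f t2 <= k * f t1.
Proof.
  intros Hns; apply NNPP; intro Hno; apply Hns; intros t1 t2 H1 H2.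
  apply NNPP; intro Hnf; apply Hno; exists t1, t2; repeat split; auto.
  intros f Hf; apply Rnot_lt_le; intro Hlt; apply Hnf; eauto.
Qed.

(* When the witness has [t1 = 0], amenability forces the family to be empty. *)
Lemma not_separating_isosceles_data (k : R) (F : (R -> R) -> Prop) :
  k <= 2 -> (forall f, F f -> increasing_nonneg f /\ amenable f) ->
  ~ separating k F ->
  exists a b, 0 < a /\ a < b /\ b <= 2 * a /\ forall f, F f -> f b <= 2 * f a.
Proof.
  intros Hk HF Hns.
  destruct (not_separating_witness k F Hns) as (t1 & t2 & H1 & H12 & Hle).
  destruct (Rle_lt_or_eq_dec _ _ H1) as [Hpos | <-].
  - exists t1, (Rmin t2 (2 * t1)); repeat split.
    + exact Hpos.
    + apply Rmin_glb_lt; lra.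
    + apply Rmin_r.
    + intros f Hf; destruct (HF f Hf) as [Hi [Hn _]].
      assert (f (Rmin t2 (2 * t1)) <= f t2)
        by (apply Hi; [apply Rmin_glb; lra | apply Rmin_l]).
      specialize (Hle f Hf); pose proof (Hn t1 H1); nra.
  - exists 1, 2; repeat split; try lra.
    intros f Hf; exfalso; destruct (HF f Hf) as [_ Ham].
    specialize (Hle f Hf); rewrite (amenable_zero f Ham) in Hle.
    pose proof (amenable_pos f t2 Ham H12); lra.
Qed.

Theorem theorem2p15 (F : (R -> R) -> Prop)
  (HF : forall f, F f -> increasing_nonneg f /\ amenable f) :
  (separating 2 F ->
     forall (X : Type) (d : X -> X -> R), is_metric d ->
       ((forall f, F f -> is_metric (fun x y => f (d x y))) <-> is_ultrametric d))
  /\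
  (~ separating 2 F ->
     exists (X : Type) (d : X -> X -> R), is_metric d /\
       (forall f, F f -> is_metric (fun x y => f (d x y))) /\ ~ is_ultrametric d).
Proof.
  split.
  - intros Hsep X d Hd; split.
    + apply (ultrametric_of_comp_metric 2 F d); auto; [lra |].
      intros f Hf; destruct (HF f Hf) as [Hi [Hn _]]; auto.
    + intros Hu f Hf; destruct (HF f Hf); now apply comp_metric_of_ultrametric.
  - intros Hns.
    destruct (not_separating_isosceles_data 2 F) as (a & b & Ha & Hab & Hb & Hfab);
      auto; [lra |].
    exists vertex, (isosceles a b); split; [|split].
    + apply isosceles_metric; lra.
    + intros f Hf; apply isosceles_comp_metric; auto; [apply HF, Hf | lra].
    + apply isosceles_not_ultrametric; exact Hab.
Qed.
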